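(* Let $X,Y$ be spaces and $F\colon\mathcal{K}(X)\to\mathcal{K}(Y)$ a map. Consider the conditions: (1) if $K,L\in\mathcal{K}(X)$ and $K\subset L$, then $F(K)\subset F(L)$; (2) for each $L\in\mathcal{K}(Y)$ there is $K\in\mathcal{K}(X)$ with $L\subset F(K)$; $(2)_c$ for each countable $L\in\mathcal{K}(Y)$ there is $K\in\mathcal{K}(X)$ with $L\subset F(K)$; $(3)_c$ if $U\subset X$ and $V\subset Y$ are non-empty open sets such that for each countable compact $L\subset V$ there is a compact $K\subset U$ with $L\subset F(K)$, then for any open cover $\mathcal{W}$ of $U$ and any $y\in V$ there exist a finite $\mathcal{E}\subset\mathcal{W}$ and a neighborhood $V_y$ of $y$ such that every countable compact $L\subset V_y$ satisfies $L\subset F(K)$ for some compact $K\subset\bigcup\mathcal{E}$. Then: (a) if $F$ satisfies (1) and (2), $X$ is Lindelöf and $Y$ is a $\mu$-complete $q$-space, then $F$ is monotone set tri-quotient; (b) if $X$ is separable metrizable and $Y$ is first countable, then $F$ satisfies $(3)_c$; moreover, in this case, if $F$ also satisfies (1) and $(2)_c$, then $F$ is monotone set tri-quotient.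
   Context: All spaces are completely regular. $\mathcal{K}(X)$ is the set of compact subsets of $X$, $\mathcal{T}(X)$ the topology of $X$. $F\colon\mathcal{K}(X)\to 2^Y$ is monotone if $K\subset L$ implies $F(K)\subset F(L)$; it is set tri-quotient if there is $s\colon\mathcal{T}(X)\to\mathcal{T}(Y)$ with: (str1) $s(U)\subset\bigcup\{F(K):K\in\mathcal{K}(X),K\subset U\}$; (str2) $s(X)=Y$; (str3) $U\subset V\Rightarrow s(U)\subset s(V)$; (str4) if $y\in s(U)$ and $\mathcal{W}$ is a cover of $\bigcup\{K\in F^{-1}(y):K\subset U\}$ by open subsets of $X$, then $y\in s(\bigcup\mathcal{E})$ for some finite $\mathcal{E}\subset\mathcal{W}$, where $F^{-1}(y)=\{K\in\mathcal{K}(X):y\in F(K)\}$. $Y$ is $\mu$-complete ($\mu$-space) if every closed bounded subset is compact, where $A$ is bounded if every continuous real function is bounded on $A$. $Y$ is a $q$-space if each $y\in Y$ has a sequence of neighborhoods $U_n$ such that whenever $y_n\in U_n$ for all $n$, $\{y_n\}$ has a cluster point in $Y$. *)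

From HB Require Import structures.
From mathcomp Require Import all_boot all_order all_algebra.
From mathcomp Require Import all_classical all_reals all_analysis.
From mathcomp Require Import Rstruct Rstruct_topology.
From Stdlib Require Import Rdefinitions.
Set Implicit Arguments. Unset Strict Implicit. Unset Printing Implicit Defensive.
Import Order.TTheory GRing.Theory Num.Theory.
Local Open Scope classical_set_scope.
Local Open Scope ring_scope.

(** Completely regular (Tychonoff, Engelking's convention): T1 and points can
    be separated from closed sets by continuous real-valued functions. *)
Definition completely_regular (T : topologicalType) : Prop :=
  accessible_space T /\
  forall (a : T) (B : set T), closed B -> ~ B a ->
    exists f : T -> R, continuous f /\ f a = 0 /\ (forall b, B b -> f b = 1).

(** A subset [A] is bounded: every continuous real function is bounded on [A]. *)
Definition fbounded (T : topologicalType) (A : set T) : Prop :=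
  forall f : T -> R, continuous f ->
    exists M : R, forall x : T, A x -> (`|f x| <= M).

Definition mu_complete (T : topologicalType) : Prop :=
  forall A : set T, closed A -> fbounded A -> compact A.

Definition q_space (T : topologicalType) : Prop :=
  forall y : T, exists U : nat -> set T, (forall n, nbhs y (U n)) /\
    forall yn : nat -> T, (forall n, U n (yn n)) ->
      exists z : T, forall N, nbhs z N -> forall m : nat, exists n : nat, leq m n /\ N (yn n).

Definition lindelof (T : topologicalType) : Prop :=
  forall W : set (set T), (forall w, W w -> open w) ->
    \bigcup_(w in W) w = setT ->
    exists E : set (set T), E `<=` W /\ countable E /\ \bigcup_(w in E) w = setT.

Definition metrizable (T : topologicalType) : Prop :=
  exists d : T -> T -> R,
    (forall x y, (0 <= d x y)) /\
    (forall x y, d x y = 0 <-> x = y) /\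
    (forall x y, d x y = d y x) /\
    (forall x y z, (d x z <= d x y + d y z)) /\
    (forall A : set T, open A <->
       forall x, A x -> exists e : R, (0 < e) /\ [set y | (d x y < e)] `<=` A).

Definition separable (T : topologicalType) : Prop :=
  exists D : set T, countable D /\ closure D = setT.

Definition first_countable (T : topologicalType) : Prop :=
  forall y : T, exists B : nat -> set T, (forall n, nbhs y (B n)) /\
    forall N, nbhs y N -> exists n, B n `<=` N.

(** A map F : K(X) -> 2^Y is represented by [F : set X -> set Y];
    only its values on compact sets are ever used. *)
Section maps.
Variables (X Y : topologicalType) (F : set X -> set Y).

Definition compact_valued : Prop := forall K, compact K -> compact (F K).

Definition monotone_map : Prop :=
  forall K L : set X, compact K -> compact L -> K `<=` L -> F K `<=` F L.

Definition cond2 : Prop :=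
  forall L : set Y, compact L -> exists K : set X, compact K /\ L `<=` F K.

Definition cond2c : Prop :=
  forall L : set Y, compact L -> countable L ->
    exists K : set X, compact K /\ L `<=` F K.

Definition cond3c : Prop :=
  forall (U : set X) (V : set Y), open U -> open V -> U !=set0 -> V !=set0 ->
    (forall L : set Y, compact L -> countable L -> L `<=` V ->
       exists K : set X, compact K /\ K `<=` U /\ L `<=` F K) ->
    forall W : set (set X), (forall w, W w -> open w) -> U `<=` \bigcup_(w in W) w ->
    forall y : Y, V y ->
      exists E : set (set X), E `<=` W /\ finite_set E /\
        exists Vy : set Y, nbhs y Vy /\
          forall L : set Y, compact L -> countable L -> L `<=` Vy ->
            exists K : set X, compact K /\ K `<=` \bigcup_(w in E) w /\ L `<=` F K.

Definition Finv_union (y : Y) (U : set X) : set X :=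
  \bigcup_(K in [set K : set X | compact K /\ F K y /\ K `<=` U]) K.

(** set tri-quotient; s : T(X) -> T(Y) is represented by a function on sets
    whose values on open sets are open. *)
Definition set_tri_quotient : Prop :=
  exists s : set X -> set Y,
    (forall U, open U -> open (s U)) /\
    (forall U, open U ->
       s U `<=` \bigcup_(K in [set K : set X | compact K /\ K `<=` U]) F K) /\
    s setT = setT /\
    (forall U V, open U -> open V -> U `<=` V -> s U `<=` s V) /\
    (forall U, open U -> forall y, s U y ->
       forall W : set (set X), (forall w, W w -> open w) ->
         Finv_union y U `<=` \bigcup_(w in W) w ->
         exists E : set (set X), E `<=` W /\ finite_set E /\
           s (\bigcup_(w in E) w) y).

Definition monotone_set_tri_quotient : Prop :=
  monotone_map /\ set_tri_quotient.

End maps.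

From HB Require Import structures.
From mathcomp Require Import all_boot all_order all_algebra.
From mathcomp Require Import all_classical all_reals all_analysis.
From mathcomp Require Import Rstruct Rstruct_topology.
From mathcomp Require Import lra finmap.
Set Implicit Arguments. Unset Strict Implicit. Unset Printing Implicit Defensive.
Import Order.TTheory GRing.Theory Num.Theory.
Local Open Scope classical_set_scope.

(* Fix a class of test compacta of Y: all compacta in (a), the countable ones
   in (b).  Let s(U) consist of the points y having a neighbourhood V and a
   closed Z included in U such that every test compactum in V lies in F(K) for
   some compact K included in Z; this s witnesses that F is set tri-quotient.
   The heart is a diagonal argument.  Suppose y has neighbourhoods B_n in V
   such that any test compacta L_n in B_n lie in one test compactum of V, and
   every compactum of Z lies in some Z_n.  If no pair (Z_n, B_n) had the
   lifting property, choose failing L_n; lifting their common test compactum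
   gives a compact K in Z, hence in some Z_n, which lifts L_n.
   Such B_n exist in a regular mu-complete q-space: nested closed
   neighbourhoods inside a q-sequence have a closed bounded, hence compact,
   intersection C to which they shrink, so C together with all L_n is compact.
   With a countable base at y one takes C = {y}, which keeps it countable.
   In a regular Lindelof space, Z_n closed and covered by finitely many members
   of a given open cover come from a countable open refinement whose closures
   refine the cover.  For (b), separable metrizable spaces are second
   countable, hence hereditarily Lindelof, and the same diagonal argument
   gives (3)_c. *)

(* [compact_cover] is proved for pointed spaces only; any point of a nonempty
   set can serve as the base point. *)
Definition pointed_at {T : topologicalType} (x : T) : Type := T.
HB.instance Definition _ (T : topologicalType) (x : T) :=
  Topological.copy (pointed_at x) T.
HB.instance Definition _ (T : topologicalType) (x : T) :=
  isPointed.Build (pointed_at x) x.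

Lemma compact_coverE (T : topologicalType) (K : set T) :
  compact K <-> cover_compact K.
Proof.
have [[x _]|K0] := pselect (K !=set0).
  change (@compact (pointed_at x) K <-> @cover_compact (pointed_at x) K).
  by rewrite compact_cover.
have -> : K = set0 by apply/seteqP; split=> // z Kz; apply: K0; exists z.
split=> [_ I D f _ _|_]; [by exists fset0|exact: compact0].
Qed.

Lemma compact_bigcup_II (T : topologicalType) (L : nat -> set T) (N : nat) :
  (forall n, compact (L n)) -> compact (\bigcup_(n in `I_N) L n).
Proof.
move=> cL; elim: N => [|N IH]; first by rewrite II0 bigcup_set0; exact: compact0.
by rewrite IISl bigcup_setU1; exact: compactU.
Qed.

Lemma countable_setU (T : Type) (A B : set T) :
  countable A -> countable B -> countable (A `|` B).
Proof.
move=> cA cB.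
have -> : A `|` B = \bigcup_(b in [set: bool]) (if b then A else B).
  apply/seteqP; split=> x; last by case=> -[] _ ?; [left|right].
  by case=> ?; [exists true|exists false].
by apply: bigcup_countable => // -[].
Qed.

Lemma completely_regular_regular_space (T : topologicalType) :
  completely_regular T -> regular_space T.
Proof.
move=> [_ crT] y N /= yN.
have cN : closed (~` N°) by rewrite closedC; exact: open_interior.
have [f [cf [fy0 f1]]] := crT y _ cN (fun h => h yN).
exists (f @^-1` [set r | (r < 1/2)%R]).
  apply: open_nbhs_nbhs; split; last by rewrite /= fy0 divr_gt0.
  by apply: open_comp => [? ?|]; [exact: cf|exact: open_lt].
have cl : closed (f @^-1` [set r | (r <= 1/2)%R]).
  by move/continuous_closedP : cf; apply; exact: closed_le.
move=> z /(closureS (fun w (hw : (f w < 1/2)%R) => ltW hw)).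
rewrite -(proj1 (closure_id _) cl) /= => fz; apply: contrapT => Nz.
have fz1 := f1 z (fun Nz' => Nz (interior_subset Nz')).
by move: fz; rewrite fz1; lra.
Qed.

Definition compact_exhaustion (T : topologicalType) (Z : set T) (Zn : nat -> set T) :=
  forall K, compact K -> K `<=` Z -> exists n, K `<=` Zn n.

Definition finitely_covered (T : Type) (W : set (set T)) (A : set T) :=
  exists E, E `<=` W /\ finite_set E /\ A `<=` \bigcup_(w in E) w.

Lemma countable_open_exhaustion (T : topologicalType) (E : set (set T)) :
  countable E -> (forall e, E e -> open e) ->
  exists En : nat -> set (set T), (forall n, En n `<=` E /\ finite_set (En n)) /\
    compact_exhaustion (\bigcup_(e in E) e) (fun n => \bigcup_(e in En n) e).
Proof.
move=> /countable_injP [idx idx_inj] oE.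
exists (fun n => [set e | E e /\ (idx e < n)%N]); split.
  move=> n; split=> [e []//|].
  have inj : {in [set e | E e /\ (idx e < n)%N] &, injective idx}.
    by move=> e e' /set_mem[Ee _] /set_mem[Ee' _]; apply: idx_inj; exact: mem_set.
  rewrite -(eq_finite_set (inj_card_eq inj)).
  by apply: sub_finite_set (finite_II n) => _ [e [_ en] <-].
move=> K /compact_coverE cK KE.
have [D DE KD] := cK _ E id oE KE.
exists (\max_(e <- D) idx e).+1 => x /KD [e De ex]; exists e => //; split.
  exact/set_mem/DE.
by rewrite ltnS; exact: (@leq_bigmax_seq _ _ xpredT idx).
Qed.

Lemma second_countable_countable_subcover (T : topologicalType) :
  @second_countable T -> forall W : set (set T), (forall w, W w -> open w) ->
  exists E, E `<=` W /\ countable E /\ \bigcup_(w in E) w = \bigcup_(w in W) w.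
Proof.
move=> [B cB [_ Bbasis]] W oW.
pose refines b := exists2 w, W w & b `<=` w.
have /choice [up upP] : forall b, exists w, refines b -> W w /\ b `<=` w.
  move=> b; have [[w Ww bw]|nb] := pselect (refines b); first by exists w.
  by exists set0.
exists (up @` [set b | B b /\ refines b]); split.
  by move=> _ [b [_ rb] <-]; exact: (upP b rb).1.
split.
  apply: sub_countable (card_image_le _ _) _.
  by apply: sub_countable cB; apply: subset_card_le => b [].
apply/seteqP; split=> x.
  by move=> [_ [b [_ rb] <-] bx]; exists (up b) => //; exact: (upP b rb).1.
move=> [w Ww wx].
have [b [Bb bx] bw] := Bbasis x w (open_nbhs_nbhs (conj (oW w Ww) wx)).
have rb : refines b by exists w.
by exists (up b); [exists b|exact: (upP b rb).2].
Qed.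

Lemma second_countable_lindelof (T : topologicalType) :
  @second_countable T -> lindelof T.
Proof.
move=> scT W oW cov.
have [E [EW [cE EW']]] := second_countable_countable_subcover scT oW.
by exists E; rewrite EW' cov.
Qed.

Lemma separable_metrizable_second_countable (T : topologicalType) :
  separable T -> metrizable T -> @second_countable T.
Proof.
move=> [D [cD clD]] [d [_ [d0 [dC [dtri dopen]]]]].
pose dball x r := [set z | (d x z < r)%R].
have open_dball x r : open (dball x r).
  apply/dopen => z; rewrite /dball /= => xz; exists (r - d x z)%R.
  by split=> [|u /= zu]; [lra|have := dtri x z u; lra].
pose rad k : Rdefinitions.R := (k.+1%:R^-1)%R.
exists ((fun p => dball p.1 (rad p.2)) @` (D `*` [set: nat])).
  exact: sub_countable (card_image_le _ _) (countableX cD (countableP _)).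
split; first by move=> _ [p _ <-]; exact: open_dball.
move=> x N /nbhs_interior xN.
have [e [e0 eN]] := (dopen N°).1 (open_interior N) x (nbhs_singleton xN).
have [k ke] : exists k, (rad k < e / 2)%R.
  exists (Num.truncn (e / 2)^-1)%R.
  by rewrite /rad -ltf_pV2 ?(posrE,divr_gt0)// invrK truncnS_gt.
have : closure D x by rewrite clD.
have dxx : (d x x < rad k)%R by rewrite (proj2 (d0 x x) erefl) /rad invr_gt0 ltr0Sn.
move=> /(_ _ (open_nbhs_nbhs (conj (open_dball x (rad k)) dxx))) [q [Dq xq]].
exists (dball q (rad k)).
  by split; [exists (q, k)|rewrite /dball /= dC].
move=> z qz; apply: (@interior_subset _ N); apply: eN.
by rewrite /dball /= in xq qz *; have := dtri x q z; lra.
Qed.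

Lemma lindelof_closure_refinement (T : topologicalType) :
  regular_space T -> lindelof T ->
  forall (Z : set T) (W : set (set T)), closed Z -> (forall w, W w -> open w) ->
    Z `<=` \bigcup_(w in W) w ->
  exists E, [/\ countable E, Z `<=` \bigcup_(e in E) e &
    forall e, E e -> open e /\ exists2 w, W w & closure e `<=` w].
Proof.
move=> regT lindT Z W cZ oW ZW.
pose O := [set u : set T | open u /\ exists2 w, W w & closure u `<=` w].
have [E [EZO [cE Ecov]]] : exists E, E `<=` [set u | u = ~` Z \/ O u] /\
    countable E /\ \bigcup_(u in E) u = [set: T].
  apply: lindT; first by move=> u [->|[]]//; rewrite openC.
  apply/seteqP; split=> // x _.
  have [Zx|nZx] := pselect (Z x); last by exists (~` Z); [left|].
  have [w Ww wx] := ZW x Zx.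
  have [M xM Mw] := regT x w (open_nbhs_nbhs (conj (oW w Ww) wx)).
  exists M° => //; right; split; first exact: open_interior.
  by exists w => //; apply: subset_trans Mw; apply: closureS; exact: interior_subset.
exists (E `&` O); split=> [||e [] //].
- exact: sub_countable (subset_card_le (@subIsetl _ _ _)) cE.
- move=> x Zx; have : [set: T] x by []; rewrite -Ecov => -[u Eu ux].
  exists u => //; split=> //; case: (EZO u Eu) => // uZ.
  by move: ux; rewrite uZ => /(_ Zx).
Qed.

Lemma lindelof_closed_exhaustion (T : topologicalType) :
  regular_space T -> lindelof T ->
  forall (Z : set T) (W : set (set T)), closed Z -> (forall w, W w -> open w) ->
    Z `<=` \bigcup_(w in W) w ->
  exists Zn, (forall n, closed (Zn n) /\ finitely_covered W (Zn n)) /\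
    compact_exhaustion Z Zn.
Proof.
move=> regT lindT Z W cZ oW ZW.
have [E [cE ZE EP]] := lindelof_closure_refinement regT lindT cZ oW ZW.
have [En [EnE exE]] := countable_open_exhaustion cE (fun e Ee => (EP e Ee).1).
have /choice [up upP] : forall e, exists w, E e -> W w /\ closure e `<=` w.
  move=> e; have [/EP [_ [w Ww ew]]|nE] := pselect (E e); first by exists w.
  by exists set0.
exists (fun n => Z `&` \bigcup_(e in En n) closure e); split.
  move=> n; have [EnE' finEn] := EnE n; split.
    apply: closedI cZ _; apply: closed_bigcup finEn _ => e _; exact: closed_closure.
  exists (up @` En n); split.
    by move=> _ [e /EnE' Ee <-]; exact: (upP e Ee).1.
  split; first exact: finite_image.
  move=> x [_ [e Ene ex]]; exists (up e); first by exists e.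
  exact: (upP e (EnE' e Ene)).2.
move=> K cK KZ; have [n Kn] := exE K cK (subset_trans KZ ZE).
exists n => x Kx; split; first exact: KZ.
by have [e Ene ex] := Kn x Kx; exists e => //; exact: subset_closure.
Qed.

Section lifting.
Variables (X Y : topologicalType) (F : set X -> set Y) (test : set Y -> Prop).

Definition lifts_into (Z : set X) (V : set Y) :=
  forall L, test L -> L `<=` V -> exists K, compact K /\ K `<=` Z /\ L `<=` F K.

Definition absorbing (V : set Y) (B : nat -> set Y) :=
  forall L : nat -> set Y, (forall n, test (L n) /\ L n `<=` B n) ->
    exists M, test M /\ (forall n, L n `<=` M) /\ M `<=` V.

Lemma lifts_into_exhaustion V B Z Zn :
  absorbing V B -> lifts_into Z V -> compact_exhaustion Z Zn ->
  exists n, lifts_into (Zn n) (B n).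
Proof.
move=> absB liftZ exZ; apply: contrapT => nolift.
have /choice [L LP] : forall n, exists L, [/\ test L, L `<=` B n &
    forall K, compact K -> K `<=` Zn n -> ~ L `<=` F K].
  move=> n; apply: contrapT => nL; apply: nolift; exists n => L tL LB.
  apply: contrapT => noK; apply: nL; exists L; split=> // K cK KZ LF.
  by apply: noK; exists K.
have [M [tM [LM MV]]] : exists M, test M /\ (forall n, L n `<=` M) /\ M `<=` V.
  by apply: absB => n; have [] := LP n.
have [K [cK [KZ MF]]] := liftZ M tM MV.
have [n KZn] := exZ K cK KZ.
by have [_ _ /(_ K cK KZn)] := LP n; apply; apply: subset_trans (LM n) MF.
Qed.

End lifting.

Lemma absorbing_setU_bigcup (T : topologicalType) (test : set T -> Prop)
    (C V : set T) (B : nat -> set T) :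
  C `<=` V -> (forall n, B n `<=` V) ->
  (forall L : nat -> set T, (forall n, test (L n) /\ L n `<=` B n) ->
    test (C `|` \bigcup_n L n)) ->
  absorbing test V B.
Proof.
move=> CV BV testCL L LB; exists (C `|` \bigcup_n L n); split; first exact: testCL.
split; first by move=> n x Lx; right; exists n.
by move=> x [/CV //|[n _ /(proj2 (LB n)) /BV]].
Qed.

Lemma nested_nbhs (T : topologicalType) (P : set T -> Prop) (y : T)
    (U : nat -> set T) :
  (forall N, nbhs y N -> exists2 M, nbhs y M & P M /\ M `<=` N) ->
  (forall n, nbhs y (U n)) ->
  exists B : nat -> set T, (forall n, [/\ nbhs y (B n), P (B n) & B n `<=` U n]) /\
    forall m n, (m <= n)%N -> B n `<=` B m.
Proof.
move=> shrinkP yU.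
have /choice [sh shP] : forall N, exists M, nbhs y N -> [/\ nbhs y M, P M & M `<=` N].
  move=> N; have [/shrinkP [M yM [PM MN]]|nyN] := pselect (nbhs y N); first by exists M.
  by exists N => /nyN.
pose fix B n := sh (if n is m.+1 then B m `&` U n else U 0).
have BP n : [/\ nbhs y (B n), P (B n) &
    B n `<=` if n is m.+1 then B m `&` U n else U 0].
  by elim: n => [|n [yB _ _]]; apply: shP; [exact: yU|exact: filterI].
exists B; split.
  move=> n; have [yB PB BU] := BP n; split=> //.
  by move: BU; case: n {yB PB} => [|n] // BU x /BU [].
apply: (@homo_leq _ B (fun S1 S2 => S2 `<=` S1)) => [S //|S1 S2 S3 S21 S32|n].
  exact: subset_trans S32 S21.
by have [_ _ /= BU] := BP n.+1; move=> x /BU [].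
Qed.

Definition shrinks_to (T : topologicalType) (B : nat -> set T) (C : set T) :=
  forall O, open O -> C `<=` O -> exists N, forall n, (N <= n)%N -> B n `<=` O.

Lemma compact_setU_bigcup (T : topologicalType) (C : set T) (B L : nat -> set T) :
  compact C -> shrinks_to B C -> (forall n, compact (L n)) ->
  (forall n, L n `<=` B n) -> compact (C `|` \bigcup_n L n).
Proof.
move=> cC shrinkB cL LB; apply/compact_coverE => J D f oD cov.
have [D0 D0D CD0] :=
  (compact_coverE C).1 cC J D f oD (fun x Cx => cov x (or_introl Cx)).
have oD0 : open (cover [set` D0] f).
  by apply: bigcup_open => i /= /D0D /set_mem; exact: oD.
have [N BN] := shrinkB _ oD0 CD0.
have [D1 D1D LD1] := (compact_coverE _).1 (compact_bigcup_II (N := N) cL) J D f oD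
  (fun x '(ex_intro2 k _ Lkx) => cov x (or_intror (ex_intro2 _ _ k I Lkx))).
exists (D0 `|` D1)%fset; first by move=> i; rewrite in_fsetU => /orP [/D0D|/D1D].
have subU (D' : {fset J}) : {subset D' <= D0 `|` D1}%fset ->
    cover [set` D'] f `<=` cover [set` (D0 `|` D1)%fset] f.
  by move=> D'sub x [i /D'sub i01 fx]; exists i.
have sub0 := subU D0 (fun i i0 => introT (fsetUP _ _ _) (or_introl i0)).
have sub1 := subU D1 (fun i i1 => introT (fsetUP _ _ _) (or_intror i1)).
move=> x [/CD0 /sub0 //|[k _ Lkx]].
have [kN|Nk] := ltnP k N; first by apply/sub1/LD1; exists k.
exact/sub0/(BN k Nk)/LB.
Qed.

Definition seq_cluster (T : topologicalType) (z : nat -> T) (w : T) :=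
  forall N, nbhs w N -> forall m, exists n, (m <= n)%N /\ N (z n).

Section nested_closed_sets.
Variables (T : topologicalType) (B : nat -> set T).
Hypothesis B_closed : forall n, closed (B n).
Hypothesis B_nested : forall m n, (m <= n)%N -> B n `<=` B m.
Hypothesis B_cluster : forall z, (forall n, B n (z n)) -> exists w, seq_cluster z w.

Lemma nested_cluster_bigcap z :
  (forall n, B n (z n)) -> exists2 w, (\bigcap_n B n) w & seq_cluster z w.
Proof.
move=> zB; have [w wz] := B_cluster zB; exists w => // m _; apply: contrapT => nBw.
have oBm : open (~` B m) by rewrite openC.
have [n [mn zn]] := wz _ (open_nbhs_nbhs (conj oBm nBw)) m.
exact/zn/(B_nested mn)/zB.
Qed.

Lemma nested_bigcap_fbounded : fbounded (\bigcap_n B n).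
Proof.
move=> f cf; apply: contrapT => unbounded.
have /choice [z zP] : forall n : nat, exists x, (\bigcap_n B n) x /\ (n%:R < `|f x|)%R.
  move=> n; apply: contrapT => nz; apply: unbounded; exists n%:R%R => x Cx.
  by rewrite leNgt; apply/negP => fx; apply: nz; exists x.
have [w wz] := B_cluster (fun n => (zP n).1 n Logic.I).
have fw1 : nbhs w [set x | (`|f w - f x| < 1)%R].
  exact: cf w _ (nbhsx_ballx _ _ ltr01).
have [n [bn fwz]] := wz _ fw1 (Num.truncn (`|f w| + 1)%R).+1.
(* |f (z n)| <= |f w| + |f w - f (z n)| < |f w| + 1 < n < |f (z n)| *)
rewrite -(ler_nat Rdefinitions.R) in bn.
have := (zP n).2; have := truncnS_gt (`|f w| + 1)%R.
have := ler_normB (f w) (f w - f (z n))%R; rewrite opprB addrC subrK.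
by move: fwz => /=; lra.
Qed.

Lemma nested_shrinks_to_bigcap : shrinks_to B (\bigcap_n B n).
Proof.
move=> O oO CO; apply: contrapT => noN.
have /choice [z zP] : forall N, exists x, B N x /\ ~ O x.
  move=> N; apply: contrapT => nz; apply: noN; exists N => n Nn x Bnx.
  by apply: contrapT => nOx; apply: nz; exists x; split=> //; exact: B_nested Nn _ Bnx.
have [w Cw wz] := nested_cluster_bigcap (fun n => (zP n).1).
have [n [_ Ozn]] := wz _ (open_nbhs_nbhs (conj oO (CO w Cw))) 0%N.
exact: (zP n).2 Ozn.
Qed.

End nested_closed_sets.

Lemma q_space_absorbing (Y : topologicalType) :
  regular_space Y -> mu_complete Y -> q_space Y ->
  forall (y : Y) (V : set Y), nbhs y V ->
    exists B, (forall n, nbhs y (B n)) /\ absorbing compact V B.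
Proof.
move=> regY muY qY y V yV; have [U [yU qU]] := qY y.
have closed_nbhs N : nbhs y N -> exists2 M, nbhs y M & closed M /\ M `<=` N.
  move=> /regY [M yM MN]; exists (closure M); last by split; [exact: closed_closure|].
  by apply: filterS yM; exact: subset_closure.
have [B [BP Bnest]] := nested_nbhs closed_nbhs (fun n => filterI yV (yU n)).
have Bclosed n : closed (B n) by have [] := BP n.
have BVU n : B n `<=` V `&` U n by have [] := BP n.
have cluster z : (forall n, B n (z n)) -> exists w, seq_cluster z w.
  by move=> zB; apply: qU => n; have [] := BVU n _ (zB n).
have cC : compact (\bigcap_n B n).
  apply: muY; first exact: closed_bigI.
  exact: nested_bigcap_fbounded cluster.
exists B; split=> [n|]; first by have [] := BP n.
apply: (absorbing_setU_bigcup (C := \bigcap_n B n)).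
- by move=> x /(_ 0%N Logic.I) /BVU [].
- by move=> n x /BVU [].
- move=> L LB; apply: compact_setU_bigcup cC _ _ _.
  + exact: nested_shrinks_to_bigcap Bclosed Bnest cluster.
  + by move=> n; have [] := LB n.
  + by move=> n; have [] := LB n.
Qed.

Lemma first_countable_absorbing (Y : topologicalType) : first_countable Y ->
  forall (y : Y) (V : set Y), nbhs y V -> exists B, (forall n, nbhs y (B n)) /\
    absorbing (fun L => compact L /\ countable L) V B.
Proof.
move=> fcY y V yV; have [Bf [yBf Bfbasis]] := fcY y.
have [B [BP Bnest]] := @nested_nbhs _ setT y (fun n => V `&` Bf n)
  (fun N yN => ex_intro2 _ _ N yN (conj Logic.I (@subset_refl _ N)))
  (fun n => filterI yV (yBf n)).
have BVBf n : B n `<=` V `&` Bf n by have [] := BP n.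
have shrink : shrinks_to B [set y].
  move=> O oO yO; have [k Bfk] := Bfbasis O (open_nbhs_nbhs (conj oO (yO y erefl))).
  by exists k => n kn x /(Bnest _ _ kn) /BVBf [_ /Bfk].
exists B; split=> [n|]; first by have [] := BP n.
apply: (absorbing_setU_bigcup (C := [set y])).
- by move=> x ->; exact: nbhs_singleton.
- by move=> n x /BVBf [].
- move=> L LB; split.
    apply: compact_setU_bigcup (@compact_set1 _ y) shrink _ _.
      by move=> n; have [[]] := LB n.
    by move=> n; have [] := LB n.
  apply: countable_setU (countable1 y) _.
  by apply: bigcup_countable => // n _; have [[]] := LB n.
Qed.

Section tri_quotient_criterion.
Variables (X Y : topologicalType) (F : set X -> set Y) (test : set Y -> Prop).
Hypothesis test_set1 : forall y, test [set y].
Hypothesis absorbing_nbhs : forall (y : Y) (V : set Y), nbhs y V ->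
  exists B, (forall n, nbhs y (B n)) /\ absorbing test V B.
Hypothesis closed_exhaustion : forall (Z : set X) (W : set (set X)),
  closed Z -> (forall w, W w -> open w) -> Z `<=` \bigcup_(w in W) w ->
  exists Zn, (forall n, closed (Zn n) /\ finitely_covered W (Zn n)) /\
    compact_exhaustion Z Zn.
Hypothesis lifts_whole : lifts_into F test setT setT.
Hypothesis F_monotone : monotone_map F.

Definition liftable_points (U : set X) : set Y :=
  [set y | exists Z V, [/\ closed Z, Z `<=` U, nbhs y V & lifts_into F test Z V]].

Lemma open_liftable_points U : open (liftable_points U).
Proof.
rewrite openE => y [Z [V [cZ ZU /nbhs_interior yV lZV]]].
by apply: filterS yV => z zV; exists Z, V.
Qed.

Lemma lifts_into_point Z V y : lifts_into F test Z V -> V y ->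
  exists K, compact K /\ K `<=` Z /\ F K y.
Proof.
move=> lZV Vy; have [|K [cK [KZ yK]]] := lZV _ (test_set1 y); first by move=> _ ->.
by exists K; split=> //; split=> //; exact: yK.
Qed.

Lemma liftable_points_lift U y : liftable_points U y ->
  exists2 K, compact K /\ K `<=` U & F K y.
Proof.
move=> [Z [V [_ ZU /nbhs_singleton Vy lZV]]].
have [K [cK [KZ yK]]] := lifts_into_point lZV Vy.
by exists K => //; split=> //; exact: subset_trans ZU.
Qed.

Lemma liftable_points_setT : liftable_points setT = setT.
Proof.
apply/seteqP; split=> // y _; exists setT, setT.
by split; [exact: closedT|by []|exact: filterT|].
Qed.

Lemma liftable_pointsS U U' : U `<=` U' -> liftable_points U `<=` liftable_points U'.
Proof.
by move=> UU' y [Z [V [cZ ZU yV lZV]]]; exists Z, V; split=> //; exact: subset_trans UU'.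
Qed.

(* Monotonicity of [F] lets one add any point of [Z] to a compactum lifting [y]. *)
Lemma lifts_into_sub_Finv_union U Z V y : Z `<=` U -> lifts_into F test Z V -> V y ->
  Z `<=` Finv_union F y U.
Proof.
move=> ZU lZV Vy x Zx; have [K [cK [KZ yK]]] := lifts_into_point lZV Vy.
have cKx : compact (K `|` [set x]) by apply: compactU => //; exact: compact_set1.
exists (K `|` [set x]); last by right.
split=> //; split; first exact: F_monotone cK cKx (@subsetUl _ _ _) _ yK.
by move=> z [/KZ|->]; exact: ZU.
Qed.

Lemma liftable_points_finite_subcover U y (W : set (set X)) :
  liftable_points U y -> (forall w, W w -> open w) ->
  Finv_union F y U `<=` \bigcup_(w in W) w ->
  exists E, E `<=` W /\ finite_set E /\ liftable_points (\bigcup_(w in E) w) y.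
Proof.
move=> [Z [V [cZ ZU yV lZV]]] oW FinvW.
have ZW := subset_trans (lifts_into_sub_Finv_union ZU lZV (nbhs_singleton yV)) FinvW.
have [Zn [ZnP exZ]] := closed_exhaustion cZ oW ZW.
have [B [yB absB]] := absorbing_nbhs yV.
have [n lZnB] := lifts_into_exhaustion absB lZV exZ.
have [cZn [E [EW [finE ZnE]]]] := ZnP n.
by exists E; split=> //; split=> //; exists (Zn n), (B n).
Qed.

Theorem set_tri_quotient_of_lifting : set_tri_quotient F.
Proof.
exists liftable_points; split=> [U _|]; first exact: open_liftable_points.
split=> [U _ y /liftable_points_lift [K KU yK]|]; first by exists K.
split; first exact: liftable_points_setT.
split=> [U U' _ _|U _ y]; first exact: liftable_pointsS.
by move=> yU W oW FW; exact: liftable_points_finite_subcover yU oW FW.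
Qed.

End tri_quotient_criterion.

Lemma second_countable_cond3c (X Y : topologicalType) (F : set X -> set Y) :
  @second_countable X -> first_countable Y -> cond3c F.
Proof.
move=> scX fcY U V _ oV _ _ lUV W oW UW y Vy.
have [E [EW [cE EW']]] := second_countable_countable_subcover scX oW.
have [En [EnE exE]] := countable_open_exhaustion cE (fun e Ee => oW e (EW e Ee)).
have exU : compact_exhaustion U (fun n => \bigcup_(e in En n) e).
  by move=> K cK KU; apply: exE cK _; rewrite EW'; exact: subset_trans UW.
have [B [yB absB]] := first_countable_absorbing fcY (open_nbhs_nbhs (conj oV Vy)).
have lUV' : lifts_into F (fun L => compact L /\ countable L) U V.
  by move=> L [cL ctL] LV; exact: lUV.
have [n lEB] := lifts_into_exhaustion absB lUV' exU.
have [EnEn finEn] := EnE n.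
exists (En n); split; first exact: subset_trans EW.
split=> //; exists (B n); split=> // L cL ctL LB; exact: lEB.
Qed.

Theorem proposition2p2 (X Y : topologicalType)
  (crX : completely_regular X) (crY : completely_regular Y)
  (F : set X -> set Y) (hF : compact_valued F) :
  (monotone_map F -> cond2 F -> lindelof X -> mu_complete Y -> q_space Y ->
     monotone_set_tri_quotient F) /\
  (separable X -> metrizable X -> first_countable Y ->
     cond3c F /\ (monotone_map F -> cond2c F -> monotone_set_tri_quotient F)).
Proof.
have regX := completely_regular_regular_space crX.
have regY := completely_regular_regular_space crY.
split=> [Fmono F2 lindX muY qY|sepX metX fcY].
  split=> //; apply: (@set_tri_quotient_of_lifting _ _ _ compact) => //.
  - by move=> y; exact: compact_set1.
  - exact: q_space_absorbing.
  - exact: lindelof_closed_exhaustion.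
  - by move=> L cL _; have [K [cK LK]] := F2 L cL; exists K.
have scX := separable_metrizable_second_countable sepX metX.
split=> [|Fmono F2c]; first exact: second_countable_cond3c.
split=> //.
apply: (@set_tri_quotient_of_lifting _ _ _ (fun L => compact L /\ countable L)) => //.
- by move=> y; split; [exact: compact_set1|exact: countable1].
- exact: first_countable_absorbing.
- exact/lindelof_closed_exhaustion/second_countable_lindelof.
- by move=> L [cL ctL] _; have [K [cK LK]] := F2c L cL ctL; exists K.
Qed.
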